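(* Let $0<A_0<A_1$, $0<\sigma<1$ and let $p\ge2$ be an integer. Then the set of $b\in[0,1]$ for which there are infinitely many pairs of integers $0<m<n$ satisfying $$A_0<\frac{b^{p^m}}{\sigma^{n-m}}<A_1$$ is a dense $G_\delta$ subset of $[0,1]$ of full Lebesgue measure. *)

From Stdlib Require Import Reals Lra List.
Open Scope R_scope.

Definition unit_interval (x : R) : Prop := 0 <= x <= 1.

Definition dense_in_unit (S : R -> Prop) : Prop :=
  forall x eps, unit_interval x -> 0 < eps ->
    exists y, unit_interval y /\ S y /\ Rabs (y - x) < eps.

Definition G_delta_in_unit (S : R -> Prop) : Prop :=
  exists U : nat -> R -> Prop,
    (forall k, open_set (U k)) /\
    (forall x, unit_interval x -> (S x <-> forall k, U k x)).

Definition lebesgue_null (N : R -> Prop) : Prop :=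
  forall eps, 0 < eps ->
    exists a b : nat -> R,
      (forall k, a k <= b k) /\
      (forall x, N x -> exists k, a k < x < b k) /\
      (forall K, sum_f_R0 (fun k => b k - a k) K <= eps).

Definition full_measure_in_unit (S : R -> Prop) : Prop :=
  lebesgue_null (fun x => unit_interval x /\ ~ S x).

Definition good_pair (A0 A1 sigma : R) (p : nat) (b : R) (m n : nat) : Prop :=
  (0 < m)%nat /\ (m < n)%nat /\
  A0 < b ^ (p ^ m) / sigma ^ (n - m) < A1.

Definition inf_many_good_pairs (A0 A1 sigma : R) (p : nat) (b : R) : Prop :=
  ~ exists l : list (nat * nat),
      forall m n, good_pair A0 A1 sigma p b m n -> In (m, n) l.

(* Write b = sigma^z with z >= 0, so that b^(p^m) / sigma^(n-m) is
   sigma^(p^m z - (n - m)).  The condition A0 < ... < A1 asks that p^m z lie in a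
   fixed open window modulo the integers, and for P = p^s large there is a digit
   c such that this holds, with n - m the integer part of p^m z plus a constant,
   as soon as the first base-P digit after the point of p^m z is c.  So sigma^z
   is good when this digit shows up for infinitely many m.

   The z whose base-P expansion ends in ccc... are dense, and they give good
   points.  If sigma^z is bad, then from some M on the base-P digits of p^M z
   avoid c; for a fixed integer part such numbers are covered by (P - 1)^K
   intervals of length 2 / P^K, so the bad points form countably many null sets,
   z |-> sigma^z being Lipschitz on [0, +oo).  Finally, for each k, having a good
   pair with n >= k is an open condition, whence the G_delta property. *)

From Stdlib Require Import Reals Lra Lia List ZArith Cantor Classical ClassicalEpsilon.
Open Scope R_scope.

Definition cover_len (l : list (R * R)) : R :=
  fold_right (fun iv s => snd iv - fst iv + s) 0 l.

Definition covers (l : list (R * R)) (x : R) : Prop :=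
  exists iv, In iv l /\ fst iv < x < snd iv.

Definition jordan_null (N : R -> Prop) : Prop :=
  forall eps, 0 < eps -> exists l : list (R * R),
    Forall (fun iv => fst iv <= snd iv) l /\
    (forall x, N x -> covers l x) /\ cover_len l <= eps.

Lemma cover_len_app l1 l2 : cover_len (l1 ++ l2) = cover_len l1 + cover_len l2.
Proof. unfold cover_len; induction l1 as [|iv l1 IH]; cbn; lra. Qed.

Lemma cover_len_nonneg l : Forall (fun iv => fst iv <= snd iv) l -> 0 <= cover_len l.
Proof. unfold cover_len; induction 1; cbn; lra. Qed.

Lemma sum_nth_le_cover_len l K :
  Forall (fun iv => fst iv <= snd iv) l ->
  sum_f_R0 (fun k => snd (nth k l (0, 0)) - fst (nth k l (0, 0))) K <= cover_len l.
Proof.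
  intros Hl; revert K; induction Hl as [|iv l Hiv Hl IH]; intros K.
  - rewrite (sum_eq _ (fun _ => 0)), sum_cte; cbn; [lra|].
    intros [|k] _; cbn; lra.
  - pose proof (cover_len_nonneg l Hl).
    change (cover_len (iv :: l)) with (snd iv - fst iv + cover_len l).
    destruct K as [|K]; [cbn; lra|].
    rewrite decomp_sum by lia; cbn [nth Nat.pred].
    specialize (IH K); lra.
Qed.

Lemma sum_half_powers (eps : R) K :
  0 < eps -> sum_f_R0 (fun j => eps / 2 ^ S j) K <= eps.
Proof.
  intros Heps.
  enough (sum_f_R0 (fun j => eps / 2 ^ S j) K = eps - eps / 2 ^ S K)
    by (assert (0 < eps / 2 ^ S K) by (apply Rdiv_lt_0_compat, pow_lt; lra); lra).
  induction K as [|K IH]; cbn [sum_f_R0]; [cbn; field|].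
  rewrite IH; cbn [pow]; field; apply pow_nonzero; lra.
Qed.

(* The covers of the pieces, each preceded by the empty interval [(0, 0)] so
   that the first [n] pieces contribute at least [n] intervals. *)
Fixpoint concat_covers (cov : nat -> list (R * R)) (n : nat) : list (R * R) :=
  match n with
  | O => nil
  | S n => concat_covers cov n ++ (0, 0) :: cov n
  end.

Section ConcatCovers.
Variable cov : nat -> list (R * R).

Lemma concat_covers_length n : (n <= length (concat_covers cov n))%nat.
Proof. induction n as [|n IH]; cbn; rewrite ?length_app; cbn; lia. Qed.

Lemma concat_covers_prefix n n' : (n <= n')%nat ->
  exists tail, concat_covers cov n' = concat_covers cov n ++ tail.
Proof.
  induction 1 as [|n' _ [tail IH]]; [exists nil; now rewrite app_nil_r|].
  exists (tail ++ (0, 0) :: cov n'); cbn; now rewrite IH, app_assoc.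
Qed.

Lemma nth_concat_covers_stable k n n' :
  (k < length (concat_covers cov n))%nat -> (n <= n')%nat ->
  nth k (concat_covers cov n') (0, 0) = nth k (concat_covers cov n) (0, 0).
Proof.
  intros Hk Hn; destruct (concat_covers_prefix n n' Hn) as [tail ->].
  now apply app_nth1.
Qed.

Lemma cover_len_concat_covers n :
  cover_len (concat_covers cov (S n)) = sum_f_R0 (fun j => cover_len (cov j)) n.
Proof.
  induction n as [|n IH]; [unfold cover_len; cbn; lra|].
  rewrite tech5, <- IH.
  change (concat_covers cov (S (S n)))
    with (concat_covers cov (S n) ++ (0, 0) :: cov (S n)).
  rewrite cover_len_app.
  change (cover_len ((0, 0) :: cov (S n))) with (0 - 0 + cover_len (cov (S n))).
  lra.
Qed.
End ConcatCovers.

(* Take covers of total lengths [eps / 2^(j+1)] of the pieces and enumerate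
   their intervals one after the other. *)
Lemma lebesgue_null_countable_union (Ns : nat -> R -> Prop) (N : R -> Prop) :
  (forall j, jordan_null (Ns j)) -> (forall x, N x -> exists j, Ns j x) ->
  lebesgue_null N.
Proof.
  intros Hnull HN eps Heps.
  destruct (choice (fun j l => Forall (fun I => fst I <= snd I) l /\
      (forall x, Ns j x -> covers l x) /\ cover_len l <= eps / 2 ^ S j)) as [cov Hcov].
  { intros j; apply Hnull, Rdiv_lt_0_compat, pow_lt; lra. }
  set (interval k := nth k (concat_covers cov (S k)) (0, 0)).
  assert (Hinterval : forall k n, (k < n)%nat ->
      interval k = nth k (concat_covers cov n) (0, 0)).
  { intros k n Hkn; unfold interval.
    symmetry; apply nth_concat_covers_stable; [|lia].
    pose proof (concat_covers_length cov (S k)); lia. }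
  assert (Hord : forall n, Forall (fun I => fst I <= snd I) (concat_covers cov n)).
  { induction n as [|n IH]; cbn; [constructor|].
    apply Forall_app; split; [exact IH|constructor; [cbn; lra|apply Hcov]]. }
  exists (fun k => fst (interval k)), (fun k => snd (interval k)); split; [|split].
  - intros k; unfold interval.
    destruct (nth_in_or_default k (concat_covers cov (S k)) (0, 0)) as [Hin| ->];
      [exact (proj1 (Forall_forall _ _) (Hord (S k)) _ Hin)|cbn; lra].
  - intros x Hx; destruct (HN x Hx) as [j Hj].
    destruct (proj1 (proj2 (Hcov j)) x Hj) as [I [HI HxI]].
    destruct (In_nth _ _ (0, 0) HI) as [r [Hr HrI]].
    set (k := (length (concat_covers cov j) + S r)%nat).
    assert (Hk : (k < length (concat_covers cov (S j)))%nat)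
      by (cbn; rewrite length_app; cbn; lia).
    exists k; rewrite (Hinterval k (S (k + j))), (nth_concat_covers_stable cov k (S j))
      by lia.
    cbn; rewrite app_nth2 by lia.
    replace (k - length (concat_covers cov j))%nat with (S r) by lia.
    cbn; now rewrite HrI.
  - intros K.
    rewrite (sum_eq _ (fun k => snd (nth k (concat_covers cov (S K)) (0, 0))
                                 - fst (nth k (concat_covers cov (S K)) (0, 0))))
      by (intros k Hk; now rewrite (Hinterval k (S K)) by lia).
    eapply Rle_trans; [apply sum_nth_le_cover_len, Hord|].
    rewrite cover_len_concat_covers.
    eapply Rle_trans; [apply sum_Rle; intros j _; apply Hcov|].
    now apply sum_half_powers.
Qed.

Lemma jordan_null_singleton (x0 : R) : jordan_null (fun x => x = x0).
Proof.
  intros eps Heps; exists ((x0 - eps / 2, x0 + eps / 2) :: nil).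
  split; [|split].
  - constructor; [cbn; lra|constructor].
  - intros x ->; exists (x0 - eps / 2, x0 + eps / 2); split; [now left|cbn; lra].
  - unfold cover_len; cbn; lra.
Qed.

Lemma jordan_null_lipschitz_image (f : R -> R) (K : R) (N : R -> Prop) :
  0 < K -> (forall x y, 0 <= x -> 0 <= y -> Rabs (f x - f y) <= K * Rabs (x - y)) ->
  (forall x, N x -> 0 <= x) -> jordan_null N ->
  jordan_null (fun y => exists x, N x /\ y = f x).
Proof.
  intros HK Hlip Hpos Hnull eps Heps.
  destruct (Hnull (eps / (2 * K))) as [l [Hord [Hcov Hlen]]].
  { apply Rdiv_lt_0_compat; lra. }
  (* The part of [I] in [[0, +oo)] is mapped within [K] times the length of [I]
     of the image of its left end. *)
  set (image (I : R * R) := (f (Rmax (fst I) 0) - K * (snd I - fst I),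
                             f (Rmax (fst I) 0) + K * (snd I - fst I))).
  exists (map image l); split; [|split].
  - apply Forall_map; refine (Forall_impl _ _ Hord); intros I HI; cbn; nra.
  - intros y [x [Hx ->]]; destruct (Hcov x Hx) as [I [HI HxI]].
    exists (image I); split; [now apply in_map|].
    assert (Ha : 0 <= Rmax (fst I) 0 <= x).
    { split; [apply Rmax_r|apply Rmax_lub; pose proof (Hpos x Hx); lra]. }
    assert (Hd : Rabs (x - Rmax (fst I) 0) < snd I - fst I).
    { rewrite Rabs_pos_eq by lra; pose proof (Rmax_l (fst I) 0); lra. }
    assert (Hf : Rabs (f x - f (Rmax (fst I) 0)) < K * (snd I - fst I)).
    { eapply Rle_lt_trans; [apply Hlip; [apply Hpos, Hx|apply Ha]|].
      now apply Rmult_lt_compat_l. }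
    apply Rabs_def2 in Hf; cbn; lra.
  - assert (Hmap : cover_len (map image l) = 2 * K * cover_len l).
    { clear - l; unfold cover_len; induction l as [|I l IH]; cbn; [ring|].
      rewrite IH; ring. }
    rewrite Hmap; replace eps with (2 * K * (eps / (2 * K))) by (field; lra).
    apply Rmult_le_compat_l; lra.
Qed.

Lemma nat_floor_exists (x : R) : 0 <= x -> exists n : nat, INR n <= x < INR n + 1.
Proof.
  intros Hx; destruct (base_Int_part x) as [H1 H2].
  assert (H0 : (0 <= Int_part x)%Z) by (cut (-1 < Int_part x)%Z; [lia|apply lt_IZR; lra]).
  exists (Z.to_nat (Int_part x)); rewrite INR_IZR_INZ, Z2Nat.id by exact H0; lra.
Qed.

(* The first digit after the point of [x] in base [P] is [c]: the integer part
   of [P x] is [A P + c] for some [A]. *)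
Definition has_digit (P c : nat) (x : R) : Prop :=
  exists A : nat, INR (A * P + c) <= INR P * x < INR (A * P + c) + 1.

Lemma has_digit_pos P c x : (1 <= c)%nat -> has_digit P c x -> 0 < x.
Proof.
  intros Hc [A [HA _]]; rewrite plus_INR, mult_INR in HA.
  apply (le_INR 1) in Hc; cbn in Hc.
  pose proof (pos_INR A); pose proof (pos_INR P); nra.
Qed.

Lemma digit_step P c x B : (1 <= P)%nat -> INR B <= x < INR B + 1 -> ~ has_digit P c x ->
  exists d, (d < P)%nat /\ d <> c /\ INR (B * P + d) <= INR P * x < INR (B * P + d) + 1.
Proof.
  intros HP Hx Hnd; apply (le_INR 1) in HP; cbn in HP.
  destruct (nat_floor_exists (INR P * (x - INR B))) as [d Hd]; [nra|].
  exists d; rewrite plus_INR, mult_INR; split; [|split].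
  - apply INR_lt; nra.
  - intros ->; apply Hnd; exists B; rewrite plus_INR, mult_INR; lra.
  - lra.
Qed.

Definition digits_except (P c : nat) : list nat := seq 0 c ++ seq (S c) (P - S c).

Lemma in_digits_except P c d : (d < P)%nat -> d <> c -> In d (digits_except P c).
Proof.
  intros; apply in_or_app; destruct (Nat.lt_ge_cases d c);
    [left|right]; apply in_seq; lia.
Qed.

Definition extend_avoiding (P c : nat) (l : list nat) : list nat :=
  flat_map (fun B => map (fun d => (B * P + d)%nat) (digits_except P c)) l.

Lemma length_iter_extend_avoiding P c K l : (c < P)%nat ->
  length (Nat.iter K (extend_avoiding P c) l) = (length l * (P - 1) ^ K)%nat.
Proof.
  intros Hc; induction K as [|K IH]; [cbn; lia|].
  rewrite Nat.iter_succ; unfold extend_avoiding at 1.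
  rewrite (flat_map_constant_length (c := (P - 1)%nat)), IH; [cbn; lia|].
  intros B _; rewrite length_map; unfold digits_except.
  rewrite length_app, !length_seq; lia.
Qed.

Definition digit_avoiders (P c A : nat) (w : R) : Prop :=
  INR A <= w < INR A + 1 /\ forall j, ~ has_digit P c (INR P ^ j * w).

Lemma floor_in_iter_extend_avoiding P c A w K : (1 <= P)%nat ->
  digit_avoiders P c A w ->
  exists B, In B (Nat.iter K (extend_avoiding P c) (A :: nil)) /\
            INR B <= INR P ^ K * w < INR B + 1.
Proof.
  intros HP [HA Havoid]; induction K as [|K [B [HB HwB]]].
  - exists A; split; [now left|cbn; lra].
  - destruct (digit_step P c _ B HP HwB (Havoid K)) as [d [HdP [Hdc Hd]]].
    exists (B * P + d)%nat; rewrite Nat.iter_succ; split.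
    + apply in_flat_map; exists B; split; [exact HB|].
      now apply in_map, in_digits_except.
    + cbn [pow]; rewrite Rmult_assoc; exact Hd.
Qed.

Lemma jordan_null_digit_avoiders P c A : (c < P)%nat -> jordan_null (digit_avoiders P c A).
Proof.
  intros Hc eps Heps.
  assert (HP : 1 <= INR P) by (apply (le_INR 1); lia).
  set (q := (INR P - 1) / INR P).
  assert (Hq : 0 <= q < 1).
  { unfold q; split; [apply Rle_mult_inv_pos; lra|].
    apply Rmult_lt_reg_r with (INR P); [lra|]; field_simplify; lra. }
  destruct (pow_lt_1_zero q ltac:(rewrite Rabs_pos_eq; lra) (eps / 2)) as [K HK]; [lra|].
  specialize (HK K (Nat.le_refl K)); rewrite Rabs_pos_eq in HK by (apply pow_le; lra).
  assert (HQ : 0 < INR P ^ K) by (apply pow_lt; lra).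
  set (Bs := Nat.iter K (extend_avoiding P c) (A :: nil)).
  exists (map (fun B => ((INR B - 1) / INR P ^ K, (INR B + 1) / INR P ^ K)) Bs).
  split; [|split].
  - apply Forall_map, Forall_forall; intros B _; cbn.
    apply Rmult_le_compat_r; [left; apply Rinv_0_lt_compat|]; lra.
  - intros w Hw; destruct (floor_in_iter_extend_avoiding P c A w K ltac:(lia) Hw)
      as [B [HB HwB]].
    exists ((INR B - 1) / INR P ^ K, (INR B + 1) / INR P ^ K).
    split; [apply in_map_iff; now exists B|cbn].
    split; [apply Rmult_lt_reg_r with (INR P ^ K)|apply Rmult_lt_reg_l with (INR P ^ K)];
      try field_simplify; lra.
  - assert (Hlen : forall l : list nat, cover_len
              (map (fun B => ((INR B - 1) / INR P ^ K, (INR B + 1) / INR P ^ K)) l)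
              = INR (length l) * (2 / INR P ^ K)).
    { unfold cover_len; induction l as [|B l IH]; cbn [map fold_right length];
        [cbn; ring|]; rewrite IH, S_INR; cbn; field; lra. }
    rewrite Hlen; unfold Bs; rewrite length_iter_extend_avoiding by exact Hc.
    rewrite Nat.mul_1_l, pow_INR, minus_INR by lia.
    replace ((INR P - INR 1) ^ K * (2 / INR P ^ K)) with (2 * q ^ K)
      by (unfold q, Rdiv; rewrite Rpow_mult_distr, pow_inv; cbn; field; lra).
    lra.
Qed.

Section PeriodicExpansion.
Variables P c : nat.
Hypothesis Hc : (c + 1 < P)%nat.

(* [r] has the periodic expansion [0.ccc...] in base [P]. *)
Let r := INR c / (INR P - 1).

Lemma periodic_point_fixed : INR P * r = INR c + r.
Proof.
  assert (INR c + 1 < INR P) by (rewrite <- S_INR; apply lt_INR; lia).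
  pose proof (pos_INR c); unfold r; field; lra.
Qed.

Lemma periodic_point_bounds : 0 <= r < 1.
Proof.
  assert (INR c + 1 < INR P) by (rewrite <- S_INR; apply lt_INR; lia).
  pose proof (pos_INR c); unfold r; split; [apply Rle_mult_inv_pos; lra|].
  apply Rmult_lt_reg_r with (INR P - 1); [lra|]; field_simplify; lra.
Qed.

Lemma has_digit_periodic N : has_digit P c (INR N + r).
Proof.
  pose proof periodic_point_fixed; pose proof periodic_point_bounds.
  exists N; rewrite plus_INR, mult_INR; lra.
Qed.

Lemma pow_shift_periodic M N : exists N', INR P ^ M * (INR N + r) = INR N' + r.
Proof.
  pose proof periodic_point_fixed.
  induction M as [|M [N' IH]]; [exists N; cbn; ring|].
  exists (N' * P + c)%nat; cbn [pow]; rewrite Rmult_assoc, IH, plus_INR, mult_INR; lra.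
Qed.
End PeriodicExpansion.

Lemma pow_unbounded (p : nat) (T : R) :
  (2 <= p)%nat -> exists N, forall n, (N <= n)%nat -> T < INR p ^ n.
Proof.
  intros Hp; apply (le_INR 2) in Hp; cbn in Hp.
  destruct (Pow_x_infinity (INR p) ltac:(rewrite Rabs_pos_eq; lra) (T + 1)) as [N HN].
  exists N; intros n Hn; specialize (HN n Hn).
  rewrite Rabs_pos_eq in HN by (apply pow_le; lra); lra.
Qed.

Lemma ln_neg (x : R) : 0 < x < 1 -> ln x < 0.
Proof. intros Hx; rewrite <- ln_1; apply ln_increasing; lra. Qed.

Lemma Rpower_unit_interval (s z : R) : 0 < s < 1 -> 0 <= z -> unit_interval (Rpower s z).
Proof.
  intros Hs Hz; pose proof (ln_neg s Hs); unfold Rpower; split; [left; apply exp_pos|].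
  rewrite <- exp_0; destruct (Req_dec z 0) as [->|]; [rewrite Rmult_0_l; lra|].
  left; apply exp_increasing; nra.
Qed.

Lemma Rpower_lipschitz (s u v : R) : 0 < s < 1 -> 0 <= u -> 0 <= v ->
  Rabs (Rpower s u - Rpower s v) <= - ln s * Rabs (u - v).
Proof.
  intros Hs; pose proof (ln_neg s Hs) as Hln.
  revert u v; enough (H : forall u v, 0 <= u -> u <= v ->
    0 <= Rpower s u - Rpower s v <= - ln s * (v - u)).
  { intros u v Hu Hv; destruct (Rle_dec u v) as [Huv|Hvu].
    - rewrite (Rabs_minus_sym u), (Rabs_pos_eq (v - u)) by lra.
      rewrite Rabs_pos_eq; apply H; lra.
    - rewrite Rabs_minus_sym, (Rabs_pos_eq (u - v)) by lra.
      rewrite Rabs_pos_eq; apply H; lra. }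
  (* [s^u - s^v = s^u (1 - s^(v-u))] with [0 < s^u <= 1] and [1 + t <= exp t]. *)
  intros u v Hu Huv; unfold Rpower.
  replace (v * ln s) with (u * ln s + (v - u) * ln s) by ring; rewrite exp_plus.
  pose proof (exp_ineq1_le ((v - u) * ln s)).
  pose proof (Rpower_unit_interval s u Hs Hu) as Hsu; unfold Rpower, unit_interval in Hsu.
  pose proof (exp_pos (u * ln s)).
  assert (exp ((v - u) * ln s) <= 1).
  { rewrite <- exp_0; destruct (Req_dec u v) as [->|];
      [rewrite Rminus_diag, Rmult_0_l; lra|left; apply exp_increasing; nra]. }
  split; nra.
Qed.

Lemma Rpower_div_lipschitz (s q u v : R) : 0 < s < 1 -> 1 <= q -> 0 <= u -> 0 <= v ->
  Rabs (Rpower s (u / q) - Rpower s (v / q)) <= - ln s * Rabs (u - v).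
Proof.
  intros Hs Hq Hu Hv; pose proof (ln_neg s Hs).
  eapply Rle_trans; [apply Rpower_lipschitz; try apply Rle_mult_inv_pos; lra|].
  apply Rmult_le_compat_l; [lra|].
  unfold Rdiv; rewrite <- Rmult_minus_distr_r, Rabs_mult, Rabs_inv, (Rabs_pos_eq q) by lra.
  rewrite <- (Rmult_1_r (Rabs (u - v))) at 2; apply Rmult_le_compat_l; [apply Rabs_pos|].
  rewrite <- Rinv_1; apply Rinv_le_contravar; lra.
Qed.

Lemma Rpower_ln_div (s b : R) : 0 < s < 1 -> 0 < b <= 1 ->
  0 <= ln b / ln s /\ Rpower s (ln b / ln s) = b.
Proof.
  intros Hs Hb; pose proof (ln_neg s Hs); split.
  - assert (ln b <= 0).
    { destruct (Req_dec b 1) as [->|]; [rewrite ln_1; lra|left; apply ln_neg; lra]. }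
    unfold Rdiv; assert (/ ln s < 0) by (apply Rinv_lt_0_compat; lra); nra.
  - unfold Rpower; replace (ln b / ln s * ln s) with (ln b) by (field; lra).
    apply exp_ln; lra.
Qed.

Lemma inf_many_iff_unbounded (Q : nat -> nat -> Prop) :
  (forall m n, Q m n -> (m < n)%nat) ->
  (~ exists l : list (nat * nat), forall m n, Q m n -> In (m, n) l) <->
  (forall k, exists m n, (k <= n)%nat /\ Q m n).
Proof.
  intros HQ; split.
  - intros Hinf k; apply NNPP; intros Hk; apply Hinf.
    exists (list_prod (seq 0 k) (seq 0 k)); intros m n Hmn.
    assert (n < k)%nat by (apply Nat.nle_gt; intros Hkn; apply Hk; now exists m, n).
    pose proof (HQ m n Hmn); apply in_prod; apply in_seq; lia.
  - intros Hunb [l Hl].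
    destruct (Hunb (S (list_max (map snd l)))) as [m [n [Hn Hmn]]].
    apply Hl, (in_map snd) in Hmn.
    pose proof (proj1 (list_max_le (map snd l) _) (Nat.le_refl _)) as Hmax.
    rewrite Forall_forall in Hmax; specialize (Hmax n Hmn); lia.
Qed.

Definition digit_window (lo hi : R) (P c : nat) (e : Z) : Prop :=
  forall f, INR c / INR P <= f < (INR c + 1) / INR P -> lo < f - IZR e < hi.

Lemma digit_window_exists (lo hi : R) (p : nat) : lo < hi -> (2 <= p)%nat ->
  exists (e : Z) (s c : nat),
    (1 <= c)%nat /\ (c + 1 < p ^ s)%nat /\ digit_window lo hi (p ^ s) c e.
Proof.
  (* [e] puts [hi + e] in [(0, 1]]; [c / P] is the first multiple of [1 / P]
     above [u = max (lo + e) 0], and [P > 2 / (v - u)] keeps [(c + 1) / P < v]. *)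
  intros Hlh Hp; destruct (archimed (- hi)) as [He1 He2].
  set (e := up (- hi)) in *.
  set (u := Rmax (lo + IZR e) 0); set (v := hi + IZR e).
  assert (Hu : lo + IZR e <= u /\ 0 <= u) by (split; [apply Rmax_l|apply Rmax_r]).
  assert (Huv : u < v) by (apply Rmax_lub_lt; unfold v; lra).
  destruct (pow_unbounded p (2 / (v - u)) Hp) as [s Hs]; specialize (Hs s (Nat.le_refl s)).
  set (Q := INR p ^ s) in *.
  assert (HQ : 2 < (v - u) * Q).
  { apply Rmult_lt_reg_r with (/ (v - u)); [apply Rinv_0_lt_compat; lra|].
    replace ((v - u) * Q * / (v - u)) with Q by (field; lra); exact Hs. }
  assert (HQ0 : 0 < Q) by nra.
  destruct (nat_floor_exists (u * Q)) as [n Hn]; [nra|].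
  exists e, s, (S n); split; [lia|].
  assert (Hc : INR (S n) + 1 < v * Q) by (rewrite S_INR; nra).
  unfold digit_window; rewrite pow_INR; fold Q; split.
  - assert (v <= 1) by (unfold v; lra).
    apply INR_lt; rewrite pow_INR, plus_INR; change (INR 1) with 1; fold Q; nra.
  - intros f [Hf1 Hf2]; split.
    + enough (u < f) by lra.
      eapply Rlt_le_trans; [|exact Hf1].
      apply Rmult_lt_reg_r with Q; [lra|]; field_simplify; [rewrite S_INR|]; lra.
    + enough (f < v) by (unfold v in *; lra).
      eapply Rlt_trans; [exact Hf2|].
      apply Rmult_lt_reg_r with Q; [lra|]; field_simplify; lra.
Qed.

Lemma neighbourhood_between (g : R -> R) (lo hi x : R) :
  continuity_pt g x -> lo < g x < hi -> neighbourhood (fun y => lo < g y < hi) x.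
Proof.
  intros Hg Hx.
  destruct (proj1 (continuity_P1 g x) Hg (fun t => lo < t < hi)) as [V [[d HV] HVg]].
  { exists (mkposreal _ (Rmin_pos (g x - lo) (hi - g x) ltac:(lra) ltac:(lra))).
    intros t Ht; unfold disc in Ht; cbn in Ht.
    pose proof (Rmin_l (g x - lo) (hi - g x)); pose proof (Rmin_r (g x - lo) (hi - g x)).
    apply Rabs_def2 in Ht; lra. }
  exists d; intros y Hy; exact (HVg y (HV y Hy)).
Qed.

Section GoodPairs.
Variables (A0 A1 sigma : R) (p : nat).
Hypotheses (hA0 : 0 < A0) (hA01 : A0 < A1) (hs0 : 0 < sigma) (hs1 : sigma < 1)
  (hp : (2 <= p)%nat).

Lemma good_pair_of_exponent (z : R) (m k : nat) : (0 < m)%nat -> (0 < k)%nat ->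
  ln A1 / ln sigma < INR p ^ m * z - INR k < ln A0 / ln sigma ->
  good_pair A0 A1 sigma p (Rpower sigma z) m (m + k).
Proof.
  intros Hm Hk [Hlo Hhi]; split; [exact Hm|split; [lia|]].
  replace (m + k - m)%nat with k by lia.
  pose proof (ln_neg sigma (conj hs0 hs1)) as Hln.
  assert (E : Rpower sigma z ^ p ^ m / sigma ^ k = Rpower sigma (INR p ^ m * z - INR k)).
  { rewrite <- (Rpower_pow (p ^ m)), <- (Rpower_pow k sigma), Rpower_mult
      by (unfold Rpower; apply exp_pos || lra).
    unfold Rminus, Rdiv; rewrite Rpower_plus, Rpower_Ropp, pow_INR, (Rmult_comm z).
    reflexivity. }
  rewrite E; unfold Rpower.
  set (t := INR p ^ m * z - INR k) in *.
  assert (E0 : ln A0 = ln A0 / ln sigma * ln sigma) by (field; lra).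
  assert (E1 : ln A1 = ln A1 / ln sigma * ln sigma) by (field; lra).
  split; [rewrite <- (exp_ln A0) by lra|rewrite <- (exp_ln A1) by lra];
    apply exp_increasing; nra.
Qed.

Lemma exponent_window_nonempty : ln A1 / ln sigma < ln A0 / ln sigma.
Proof.
  pose proof (ln_neg sigma (conj hs0 hs1)); pose proof (ln_increasing A0 A1 hA0 hA01).
  assert (/ ln sigma < 0) by (apply Rinv_lt_0_compat; lra).
  unfold Rdiv; nra.
Qed.

Lemma inf_many_of_digits (e : Z) (s c : nat) (z : R) :
  (1 <= c)%nat -> (c < p ^ s)%nat ->
  digit_window (ln A1 / ln sigma) (ln A0 / ln sigma) (p ^ s) c e ->
  (forall M, exists m, (M <= m)%nat /\ has_digit (p ^ s) c (INR p ^ m * z)) ->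
  inf_many_good_pairs A0 A1 sigma p (Rpower sigma z).
Proof.
  intros Hc HcP Hwin Hdig.
  apply inf_many_iff_unbounded; [now intros m n [_ [Hmn _]]|intros k].
  assert (Hz : 0 < z).
  { destruct (Hdig 0%nat) as [m [_ Hm]]; apply has_digit_pos in Hm; [|exact Hc].
    assert (0 < INR p ^ m) by (apply pow_lt, (lt_INR 0); lia); nra. }
  destruct (pow_unbounded p ((IZR (1 - e) + 1) / z) hp) as [M1 HM1].
  destruct (Hdig (Nat.max (S k) M1)) as [m [Hm [A HA]]].
  specialize (HM1 m ltac:(lia)).
  set (x := INR p ^ m * z) in *.
  assert (Hx : IZR (1 - e) + 1 < x).
  { apply Rmult_lt_compat_r with (r := z) in HM1; [|exact Hz].
    unfold x; field_simplify in HM1; lra. }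
  assert (HP : INR c + 1 <= INR (p ^ s)) by (rewrite <- S_INR; apply le_INR; lia).
  pose proof (pos_INR c).
  rewrite plus_INR, mult_INR in HA.
  assert (HxA : INR c / INR (p ^ s) <= x - INR A < (INR c + 1) / INR (p ^ s)).
  { split; [apply Rmult_le_reg_r with (INR (p ^ s))
            |apply Rmult_lt_reg_r with (INR (p ^ s))]; try field_simplify; lra. }
  assert (HAe : (1 <= Z.of_nat A + e)%Z).
  { enough (HA' : IZR (1 - e) < IZR (Z.of_nat A)) by (apply lt_IZR in HA'; lia).
    rewrite <- INR_IZR_INZ.
    assert ((INR c + 1) / INR (p ^ s) <= 1)
      by (apply Rmult_le_reg_r with (INR (p ^ s)); try field_simplify; lra).
    lra. }
  set (n := Z.to_nat (Z.of_nat A + e)).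
  assert (Hn : INR n = INR A + IZR e).
  { unfold n; rewrite INR_IZR_INZ, Z2Nat.id by lia.
    now rewrite plus_IZR, <- INR_IZR_INZ. }
  exists m, (m + n)%nat; split; [lia|].
  apply good_pair_of_exponent; [lia|lia|].
  fold x; rewrite Hn; replace (x - (INR A + IZR e)) with (x - INR A - IZR e) by ring.
  now apply Hwin.
Qed.

Lemma digit_window_for_pairs : exists (e : Z) (s c : nat),
  (1 <= c)%nat /\ (c + 1 < p ^ s)%nat /\
  digit_window (ln A1 / ln sigma) (ln A0 / ln sigma) (p ^ s) c e.
Proof. exact (digit_window_exists _ _ p exponent_window_nonempty hp). Qed.

(* Keep the first [a] base-[p] digits of [z0], then repeat the digit [c] in base
   [p^s]. *)
Lemma good_exponent_near (z0 : R) (a : nat) : 0 <= z0 ->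
  exists z, 0 <= z /\ INR p ^ a * Rabs (z - z0) < 1 /\
            inf_many_good_pairs A0 A1 sigma p (Rpower sigma z).
Proof.
  destruct digit_window_for_pairs as [e [s [c [Hc [HcP Hwin]]]]].
  intros Hz0; assert (Hpa : 0 < INR p ^ a) by (apply pow_lt, (lt_INR 0); lia).
  destruct (nat_floor_exists (INR p ^ a * z0)) as [B HB]; [nra|].
  set (r := INR c / (INR (p ^ s) - 1)).
  assert (Hr : 0 <= r < 1) by exact (periodic_point_bounds (p ^ s) c HcP).
  set (z := (INR B + r) / INR p ^ a).
  assert (Ez : INR p ^ a * z = INR B + r) by (unfold z; field; lra).
  exists z; split; [|split].
  - unfold z; pose proof (pos_INR B); apply Rle_mult_inv_pos; lra.
  - rewrite <- (Rabs_pos_eq (INR p ^ a)) at 1 by lra.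
    rewrite <- Rabs_mult, Rmult_minus_distr_l, Ez; apply Rabs_def1; lra.
  - apply (inf_many_of_digits e s c z Hc ltac:(lia) Hwin).
    intros M; exists (a + s * M)%nat; split; [destruct s; cbn in HcP; nia|].
    destruct (pow_shift_periodic (p ^ s) c HcP M B) as [N HN].
    replace (INR p ^ (a + s * M) * z) with (INR (p ^ s) ^ M * (INR p ^ a * z))
      by (rewrite pow_add, pow_mult, pow_INR; ring).
    rewrite Ez; unfold r; rewrite HN.
    apply has_digit_periodic, HcP.
Qed.

Let good := fun b => unit_interval b /\ inf_many_good_pairs A0 A1 sigma p b.

Lemma dense_good_points : dense_in_unit good.
Proof.
  pose proof (ln_neg sigma (conj hs0 hs1)) as Hln.
  intros x eps Hx Heps.
  set (eta := Rmin (eps / 2) 1).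
  assert (Heta : 0 < eta <= eps / 2 /\ eta <= 1)
    by (unfold eta; split; [split; [apply Rmin_pos|apply Rmin_l]|apply Rmin_r]; lra).
  set (b1 := Rmax x eta).
  assert (Hb1 : eta <= b1 <= 1 /\ Rabs (b1 - x) <= eta).
  { unfold b1, unit_interval in *; split; [split; [apply Rmax_r|apply Rmax_lub; lra]|].
    apply Rmax_case_strong; intros; rewrite ?Rminus_diag, ?Rabs_R0, ?Rabs_pos_eq; lra. }
  destruct (Rpower_ln_div sigma b1 (conj hs0 hs1) ltac:(lra)) as [Hz0 Eb1].
  destruct (pow_unbounded p (- ln sigma / (eps / 2)) hp) as [a Ha].
  specialize (Ha a (Nat.le_refl a)).
  assert (Ha' : - ln sigma < eps / 2 * INR p ^ a).
  { apply Rmult_lt_compat_r with (r := eps / 2) in Ha; [|lra].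
    field_simplify in Ha; lra. }
  destruct (good_exponent_near _ a Hz0) as [z [Hz [Hzz Hgood]]].
  exists (Rpower sigma z); split; [|split].
  - now apply Rpower_unit_interval.
  - split; [now apply Rpower_unit_interval|exact Hgood].
  - assert (Hclose : Rabs (Rpower sigma z - b1) < eps / 2).
    { rewrite <- Eb1; eapply Rle_lt_trans; [apply Rpower_lipschitz; lra|].
      pose proof (Rabs_pos (z - ln b1 / ln sigma)); nra. }
    replace (Rpower sigma z - x) with ((Rpower sigma z - b1) + (b1 - x)) by ring.
    eapply Rle_lt_trans; [apply Rabs_triang|]; lra.
Qed.

Lemma G_delta_good_points : G_delta_in_unit good.
Proof.
  exists (fun k b => exists m n, (k <= n)%nat /\ good_pair A0 A1 sigma p b m n); split.
  - intros k b [m [n [Hkn [Hm [Hmn Hb]]]]].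
    destruct (neighbourhood_between (fun y => y ^ p ^ m / sigma ^ (n - m)) A0 A1 b)
      as [d Hd]; [|exact Hb|].
    { apply continuity_pt_div; [apply derivable_continuous_pt, derivable_pt_pow|
        apply continuity_pt_const; now intros ? ?|apply pow_nonzero; lra]. }
    exists d; intros y Hy; exists m, n; split; [exact Hkn|].
    exact (conj Hm (conj Hmn (Hd y Hy))).
  - intros b Hb; unfold good, inf_many_good_pairs.
    rewrite (inf_many_iff_unbounded (good_pair A0 A1 sigma p b))
      by now intros m n [_ [? _]].
    tauto.
Qed.

Lemma digits_of_bad_point (e : Z) (s c : nat) (b : R) :
  (1 <= c)%nat -> (c < p ^ s)%nat ->
  digit_window (ln A1 / ln sigma) (ln A0 / ln sigma) (p ^ s) c e ->
  0 < b <= 1 -> ~ inf_many_good_pairs A0 A1 sigma p b ->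
  exists M A w, digit_avoiders (p ^ s) c A w /\ b = Rpower sigma (w / INR p ^ M).
Proof.
  intros Hc HcP Hwin Hb Hbad.
  destruct (Rpower_ln_div sigma b (conj hs0 hs1) Hb) as [Hz Eb].
  set (z := ln b / ln sigma) in *.
  assert (Htail : exists M, forall m, (M <= m)%nat ->
                   ~ has_digit (p ^ s) c (INR p ^ m * z)).
  { apply NNPP; intros Hno; apply Hbad; rewrite <- Eb.
    apply (inf_many_of_digits e s c z Hc HcP Hwin); intros M.
    apply NNPP; intros HM; apply Hno; exists M; intros m Hm Hd.
    apply HM; now exists m. }
  destruct Htail as [M HM].
  assert (HpM : 0 < INR p ^ M) by (apply pow_lt, (lt_INR 0); lia).
  destruct (nat_floor_exists (INR p ^ M * z)) as [A HA]; [nra|].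
  exists M, A, (INR p ^ M * z); split; [split; [exact HA|]|].
  - intros j; replace (INR (p ^ s) ^ j * (INR p ^ M * z)) with (INR p ^ (M + s * j) * z)
      by (rewrite pow_add, pow_mult, pow_INR; ring).
    apply HM; lia.
  - rewrite <- Eb at 1; f_equal; field; lra.
Qed.

Lemma null_bad_points : full_measure_in_unit good.
Proof.
  destruct digit_window_for_pairs as [e [s [c [Hc [HcP Hwin]]]]].
  apply (lebesgue_null_countable_union (fun j => match j with
    | O => fun b => b = 0
    | S j => let (M, A) := Cantor.of_nat j in
             fun b => exists w, digit_avoiders (p ^ s) c A w /\
                                b = Rpower sigma (w / INR p ^ M)
    end)).
  - intros [|j]; [apply jordan_null_singleton|].
    destruct (Cantor.of_nat j) as [M A].
    pose proof (ln_neg sigma (conj hs0 hs1)).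
    apply jordan_null_lipschitz_image with (K := - ln sigma); [lra| | |].
    + intros w w' Hw Hw'; apply Rpower_div_lipschitz; try lra.
      apply pow_R1_Rle, (le_INR 1); lia.
    + intros w [[Hw _] _]; pose proof (pos_INR A); lra.
    + apply jordan_null_digit_avoiders; lia.
  - intros b [Hb Hbad]; destruct (Req_dec b 0) as [->|Hb0]; [now exists O|].
    assert (Hb' : 0 < b <= 1) by (unfold unit_interval in Hb; lra).
    destruct (digits_of_bad_point e s c b Hc ltac:(lia) Hwin Hb'
      ltac:(intros Hinf; apply Hbad; now split)) as [M [A [w Hw]]].
    exists (S (Cantor.to_nat (M, A))); rewrite Cantor.cancel_of_to; now exists w.
Qed.
End GoodPairs.

Theorem mainTheorem2 (A0 A1 sigma : R) (p : nat)
  (hA0 : 0 < A0) (hA01 : A0 < A1)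
  (hs0 : 0 < sigma) (hs1 : sigma < 1) (hp : (2 <= p)%nat) :
  let S := fun b => unit_interval b /\ inf_many_good_pairs A0 A1 sigma p b in
  dense_in_unit S /\ G_delta_in_unit S /\ full_measure_in_unit S.
Proof.
  intros S; split; [|split].
  - now apply dense_good_points.
  - now apply G_delta_good_points.
  - now apply null_bad_points.
Qed.
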